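(* Let $p(X_1,\dots,X_n)$ be a regular $\{\circ,\wedge\}$-term, let $V=\{y_1,\dots,y_m\}$ be the set of vertices of $\mathbf{G}(p)$, and for each $i\in\{1,\dots,n\}$ let $T_i(p)$ be the set of pairs $(y_a,y_b)$ such that $(y_a,y_b)$ is an edge of $\mathbf{G}(p)$ labelled $X_i$. Then for every $i$, every class of the equivalence relation on $V$ generated by $T_i(p)$ has at most $2$ elements.
   Context: Graph of a $\{\wedge,\circ\}$-term $p$: start with vertices $y_1,y_2$ and one edge $(y_1,y_2)$ labelled $p$; repeatedly pick an edge $(y_j,y_k)$ whose label $w$ is not a variable; if $w=u\wedge v$ replace it by two edges $(y_j,y_k)$ labelled $u$ and $v$; if $w=u\circ v$ add a new vertex $y_t$ and replace the edge by $(y_j,y_t)$ labelled $u$ and $(y_t,y_k)$ labelled $v$. Stop when all labels are variables; the result is $\mathbf{G}(p)$. For a $\{\circ,\wedge\}$-term $p$, the sets $L_p,R_p$ of left/right variables are defined by: $L_{X}=R_X=\{X\}$ for a variable; $L_{q\circ r}=L_q$, $R_{q\circ r}=R_r$; $L_{q\wedge r}=L_q\cup L_r$, $R_{q\wedge r}=R_q\cup R_r$. Regular terms form the smallest class of $\{\circ,\wedge\}$-terms containing all variables, containing $q\circ r$ whenever $q,r$ are regular and $R_q\cap L_r=\emptyset$, and containing $q\wedge r$ whenever $q,r$ are regular, $L_q\cap L_r=\emptyset$ and $R_q\cap R_r=\emptyset$. *)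

From Stdlib Require Import List Arith Relations.
Import ListNotations.

Inductive term : Type :=
| Var  : nat -> term
| Comp : term -> term -> term
| Meet : term -> term -> term.

Fixpoint Lvars (p : term) : list nat :=
  match p with
  | Var x => [x]
  | Comp q _ => Lvars q
  | Meet q r => Lvars q ++ Lvars r
  end.

Fixpoint Rvars (p : term) : list nat :=
  match p with
  | Var x => [x]
  | Comp _ r => Rvars r
  | Meet q r => Rvars q ++ Rvars r
  end.

Definition disjoint (A B : list nat) : Prop :=
  forall x, In x A -> In x B -> False.

Inductive regular : term -> Prop :=
| reg_var  : forall x, regular (Var x)
| reg_comp : forall q r, regular q -> regular r ->
    disjoint (Rvars q) (Lvars r) -> regular (Comp q r)
| reg_meet : forall q r, regular q -> regular r ->
    disjoint (Lvars q) (Lvars r) -> disjoint (Rvars q) (Rvars r) ->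
    regular (Meet q r).

(** Vertices are natural numbers; [gedges p s t k]
    returns the labelled edges (source, target, variable index) obtained by
    fully decomposing an edge (s,t) labelled p, where fresh vertices are
    taken to be k, k+1, ..., together with the next unused vertex number. *)
Fixpoint gedges (p : term) (s t k : nat) : list (nat * nat * nat) * nat :=
  match p with
  | Var x => ([(s, t, x)], k)
  | Meet u v =>
      let (eu, k1) := gedges u s t k in
      let (ev, k2) := gedges v s t k1 in
      (eu ++ ev, k2)
  | Comp u v =>
      let (eu, k1) := gedges u s k (S k) in
      let (ev, k2) := gedges v k t k1 in
      (eu ++ ev, k2)
  end.

(** G(p): start with vertices y_1 = 0, y_2 = 1 and the edge (0,1) labelled p.
    The vertex set is {0, ..., nverts p - 1}. *)
Definition Gedges (p : term) : list (nat * nat * nat) := fst (gedges p 0 1 2).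
Definition nverts (p : term) : nat := snd (gedges p 0 1 2).

Definition T (i : nat) (p : term) (a b : nat) : Prop := In (a, b, i) (Gedges p).

Definition Tequiv (i : nat) (p : term) : relation nat :=
  clos_refl_sym_trans nat (T i p).

(* Call an edge list "single-neighboured" for a label x when every
   vertex is joined by x-labelled edges (in either direction) to at most one
   other vertex.  For such a list, the equivalence relation generated by the
   x-edges relates u and v only when u = v or u, v are adjacent, so each
   class is contained in {u, w} for the unique neighbour w of u.

   It therefore suffices to show that the edges produced by [gedges p s t k]
   are single-neighboured for every label.  We first describe, for any term,
   which labels can occur at which vertex: at the source s only left
   variables of p, at the target t only right variables, and otherwise the
   vertex is fresh.  The edge list of q ∘ r or q ∧ r is the concatenation of
   the lists of q and r; regularity (disjointness of the relevant variable
   sets) guarantees that no vertex carries the same label in both parts, and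
   concatenating two single-neighboured lists with this property is again
   single-neighboured. *)

From Stdlib Require Import List Arith Relations Lia.
Import ListNotations.

Definition adj (E : list (nat * nat * nat)) (v w x : nat) : Prop :=
  In (v, w, x) E \/ In (w, v, x) E.

Definition touches (E : list (nat * nat * nat)) (v x : nat) : Prop :=
  exists w, adj E v w x.

Definition single_neighbour (E : list (nat * nat * nat)) (x : nat) : Prop :=
  forall v w1 w2, adj E v w1 x -> adj E v w2 x -> w1 = w2.

Lemma adj_sym E v w x : adj E v w x -> adj E w v x.
Proof. unfold adj; tauto. Qed.

Lemma adj_app E1 E2 v w x :
  adj (E1 ++ E2) v w x <-> adj E1 v w x \/ adj E2 v w x.
Proof. unfold adj; rewrite !in_app_iff; tauto. Qed.

Lemma touches_app E1 E2 v x :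
  touches (E1 ++ E2) v x <-> touches E1 v x \/ touches E2 v x.
Proof.
  unfold touches; split.
  - intros [w H]; apply adj_app in H as [H|H]; [left|right]; exists w; exact H.
  - intros [[w H]|[w H]]; exists w; apply adj_app; auto.
Qed.

Lemma single_neighbour_app E1 E2 x :
  single_neighbour E1 x -> single_neighbour E2 x ->
  (forall v, touches E1 v x -> touches E2 v x -> False) ->
  single_neighbour (E1 ++ E2) x.
Proof.
  intros U1 U2 Hdisj v w1 w2 H1 H2.
  apply adj_app in H1 as [H1|H1]; apply adj_app in H2 as [H2|H2];
    [ eapply U1; eauto | | | eapply U2; eauto ];
    exfalso; apply (Hdisj v); eexists; eauto.
Qed.

Lemma equiv_adjacent E x : single_neighbour E x ->
  forall u v, clos_refl_sym_trans nat (fun a b => In (a, b, x) E) u v ->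
  u = v \/ adj E u v x.
Proof.
  intros U u v H.
  induction H as [u v H|u|u v _ IH|u v w _ IH1 _ IH2].
  - right; left; exact H.
  - left; reflexivity.
  - destruct IH as [->|A]; [left|right; apply adj_sym]; auto.
  - destruct IH1 as [->|A]; [exact IH2|].
    destruct IH2 as [->|B]; [right; exact A|].
    left; exact (U v u w (adj_sym _ _ _ _ A) B).
Qed.

Lemma equiv_class_at_most_two E x : single_neighbour E x ->
  forall u b c d,
    clos_refl_sym_trans nat (fun a b => In (a, b, x) E) u b ->
    clos_refl_sym_trans nat (fun a b => In (a, b, x) E) u c ->
    clos_refl_sym_trans nat (fun a b => In (a, b, x) E) u d ->
    b = c \/ b = d \/ c = d.
Proof.
  intros U u b c d Hb Hc Hd.
  destruct (equiv_adjacent E x U u b Hb) as [<-|Ab];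
    destruct (equiv_adjacent E x U u c Hc) as [<-|Ac];
    destruct (equiv_adjacent E x U u d Hd) as [<-|Ad]; auto.
  - right; right; exact (U u c d Ac Ad).
  - right; left; exact (U u b d Ab Ad).
  - left; exact (U u b c Ab Ac).
  - left; exact (U u b c Ab Ac).
Qed.

Lemma gedges_fresh_mono p : forall s t k E k',
  gedges p s t k = (E, k') -> k <= k'.
Proof.
  induction p as [x|u IHu v IHv|u IHu v IHv]; intros s t k E k' Hg; simpl in Hg.
  - injection Hg as _ <-; lia.
  - destruct (gedges u s k (S k)) as [Eu k1] eqn:Hu.
    destruct (gedges v k t k1) as [Ev k2] eqn:Hv.
    injection Hg as _ <-.
    apply IHu in Hu; apply IHv in Hv; lia.
  - destruct (gedges u s t k) as [Eu k1] eqn:Hu.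
    destruct (gedges v s t k1) as [Ev k2] eqn:Hv.
    injection Hg as _ <-.
    apply IHu in Hu; apply IHv in Hv; lia.
Qed.

Lemma gedges_touches p : forall s t k E k',
  gedges p s t k = (E, k') -> forall v x, touches E v x ->
  (v = s /\ In x (Lvars p)) \/ (v = t /\ In x (Rvars p)) \/ k <= v < k'.
Proof.
  induction p as [y|u IHu v IHv|u IHu v IHv];
    intros s t k E k' Hg w x Htouch; simpl in Hg.
  - injection Hg as <- <-.
    destruct Htouch as [w' [[H|[]]|[H|[]]]]; injection H as -> -> ->;
      simpl; auto.
  - destruct (gedges u s k (S k)) as [Eu k1] eqn:Hu.
    destruct (gedges v k t k1) as [Ev k2] eqn:Hv.
    injection Hg as <- <-.
    pose proof (gedges_fresh_mono _ _ _ _ _ _ Hu) as Mu.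
    pose proof (gedges_fresh_mono _ _ _ _ _ _ Hv) as Mv.
    apply touches_app in Htouch as [T|T].
    + destruct (IHu _ _ _ _ _ Hu w x T) as [[-> L]|[[-> _]|F]]; simpl; auto;
        right; right; lia.
    + destruct (IHv _ _ _ _ _ Hv w x T) as [[-> _]|[[-> R]|F]]; simpl; auto;
        right; right; lia.
  - destruct (gedges u s t k) as [Eu k1] eqn:Hu.
    destruct (gedges v s t k1) as [Ev k2] eqn:Hv.
    injection Hg as <- <-.
    pose proof (gedges_fresh_mono _ _ _ _ _ _ Hu) as Mu.
    pose proof (gedges_fresh_mono _ _ _ _ _ _ Hv) as Mv.
    simpl; rewrite !in_app_iff.
    apply touches_app in Htouch as [T|T].
    + destruct (IHu _ _ _ _ _ Hu w x T) as [[-> L]|[[-> R]|F]]; auto.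
      right; right; lia.
    + destruct (IHv _ _ _ _ _ Hv w x T) as [[-> L]|[[-> R]|F]]; auto.
      right; right; lia.
Qed.

Lemma gedges_single_neighbour p : regular p -> forall s t k E k',
  s < k -> t < k -> s <> t -> gedges p s t k = (E, k') ->
  forall x, single_neighbour E x.
Proof.
  induction 1 as [y|q r _ IHq _ IHr Hd|q r _ IHq _ IHr HdL HdR];
    intros s t k E k' Hs Ht Hst Hg x; simpl in Hg.
  - injection Hg as <- _.
    intros v w1 w2 [H1|H1] [H2|H2]; destruct H1 as [H1|[]];
      destruct H2 as [H2|[]]; injection H1; injection H2; intros; subst;
      congruence.
  - destruct (gedges q s k (S k)) as [Eq k1] eqn:Hq.
    destruct (gedges r k t k1) as [Er k2] eqn:Hr.
    injection Hg as <- _.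
    pose proof (gedges_fresh_mono _ _ _ _ _ _ Hq) as Mq.
    apply single_neighbour_app;
      [ apply (IHq s k (S k) Eq k1); [lia | lia | lia | exact Hq]
      | apply (IHr k t k1 Er k2); [lia | lia | lia | exact Hr]
      | ].
    (* Only the middle vertex k is shared: a right variable of q there
       and a left variable of r would contradict regularity. *)
    intros v Tq Tr.
    destruct (gedges_touches _ _ _ _ _ _ Hq v x Tq) as [[Vq Lq]|[[Vq Rq]|Fq]];
      destruct (gedges_touches _ _ _ _ _ _ Hr v x Tr) as [[Vr Lr]|[[Vr Rr]|Fr]];
      try lia.
    exact (Hd x Rq Lr).
  - destruct (gedges q s t k) as [Eq k1] eqn:Hq.
    destruct (gedges r s t k1) as [Er k2] eqn:Hr.
    injection Hg as <- _.
    pose proof (gedges_fresh_mono _ _ _ _ _ _ Hq) as Mq.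
    apply single_neighbour_app;
      [ exact (IHq s t k Eq k1 Hs Ht Hst Hq x)
      | apply (IHr s t k1 Er k2); [lia | lia | exact Hst | exact Hr]
      | ].
    (* Only s and t are shared; there the left (resp. right) variables of
       q and r are disjoint by regularity. *)
    intros v Tq Tr.
    destruct (gedges_touches _ _ _ _ _ _ Hq v x Tq) as [[Vq Lq]|[[Vq Rq]|Fq]];
      destruct (gedges_touches _ _ _ _ _ _ Hr v x Tr) as [[Vr Lr]|[[Vr Rr]|Fr]];
      try lia.
    + exact (HdL x Lq Lr).
    + exact (HdR x Rq Rr).
Qed.

Theorem lemma4p3 : forall (p : term), regular p ->
  forall (i a : nat), a < nverts p ->
  forall b c d : nat,
    b < nverts p -> c < nverts p -> d < nverts p ->
    Tequiv i p a b -> Tequiv i p a c -> Tequiv i p a d ->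
    b = c \/ b = d \/ c = d.
Proof.
  intros p Hp i a _ b c d _ _ _ Hb Hc Hd.
  assert (U : single_neighbour (Gedges p) i).
  { unfold Gedges; destruct (gedges p 0 1 2) as [E k'] eqn:Hg.
    exact (gedges_single_neighbour p Hp 0 1 2 E k' ltac:(lia) ltac:(lia)
             ltac:(lia) Hg i). }
  exact (equiv_class_at_most_two (Gedges p) i U a b c d Hb Hc Hd).
Qed.
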